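(* Consider $N$ agents $\mathcal{V}=\{1,\dots,N\}$ interacting over a fixed graph in which agent $i$ has the nonempty neighbor set $\mathcal{N}_i$ of cardinality $n_i$. Let $\beta\in[0,1)$ and let $(q_p(k))_{k\ge0}$ be a sequence with values in $\{-1,1\}$. The opinions evolve by $$\theta_i(k+1)=\theta_i(k)+\bigl(1-\theta_i(k)^2\bigr)\Bigl[\beta\bigl(q_p(k)-\theta_i(k)\bigr)+(1-\beta)\frac{1}{n_i}\sum_{j\in\mathcal{N}_i}\bigl(q_j(k)-\theta_i(k)\bigr)\Bigr],$$ with actions $q_j(k)=1$ if $\theta_j(k)>0$ or ($\theta_j(k)=0$ and $q_j(k-1)=1$), and $q_j(k)=-1$ if $\theta_j(k)<0$ or ($\theta_j(k)=0$ and $q_j(k-1)=-1$), and with $\theta_j(0)\in(-1,1)\setminus\{0\}$ for all $j$. Let $A\subset\mathcal{V}$ be a weakly robust polarized cluster, and suppose $q_p(k)=q_i(0)$ for all $k\in\mathbb{N}$ and all $i\in A$. Then $q_i(k)=q_i(0)$ for all $i\in A$ and all $k\in\mathbb{N}$.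
   Context: The neighbor set $\mathcal{N}_i$ consists of the agents $j$ with $(j,i)$ an edge of the graph. A subset $A\subset\mathcal{V}$ is a weakly robust polarized cluster if (i) $q_i(0)=q_j(0)$ for all $i,j\in A$, and (ii) for all $i\in A$, $|\mathcal{N}_i\cap A|\ge|\mathcal{N}_i\setminus A|-\frac{\beta}{1-\beta}|\mathcal{N}_i|$. *)

From mathcomp Require Import all_boot all_order all_algebra.
Set Implicit Arguments. Unset Strict Implicit. Unset Printing Implicit Defensive.
Import Order.TTheory GRing.Theory Num.Theory.
Local Open Scope ring_scope.

Section Opinion.
Variables (R : realFieldType) (V : finType).

Definition nbrs (e : rel V) (i : V) : {set V} := [set j | e j i].

Definition act_step (th qprev : R) : R :=
  if 0 < th then 1 else if th < 0 then -1 else qprev.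

(* Actions generated by the opinion trajectory theta.  At k = 0 the opinion
   is nonzero (standing assumption), so only its sign matters. *)
Fixpoint action (theta : nat -> V -> R) (j : V) (k : nat) : R :=
  match k with
  | 0 => if 0 < theta 0%N j then 1 else -1
  | k'.+1 => act_step (theta k'.+1 j) (action theta j k')
  end.

Definition opinion_dynamics (e : rel V) (beta : R) (qp : nat -> R)
    (theta : nat -> V -> R) : Prop :=
  forall (k : nat) (i : V),
    theta k.+1 i = theta k i + (1 - theta k i ^+ 2) *
      (beta * (qp k - theta k i) +
       (1 - beta) * (#|nbrs e i|%:R)^-1 *
         \sum_(j in nbrs e i) (action theta j k - theta k i)).

Definition weakly_robust_polarized_cluster (e : rel V) (beta : R)
    (theta : nat -> V -> R) (A : {set V}) : Prop :=
  (forall i j, i \in A -> j \in A -> action theta i 0 = action theta j 0) /\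
  (forall i, i \in A ->
     (#|nbrs e i :&: A|%:R : R) >=
       #|nbrs e i :\: A|%:R - beta / (1 - beta) * #|nbrs e i|%:R).

End Opinion.

(* Opinions stay in [-1, 1], since the update t + (1 - t^2)(c - t) maps [-1, 1]^2 into
   [-1, 1].  Let s = ±1 be the common initial action of the cluster A.  For i in A the
   drive c = beta q_p + (1 - beta) mean_j q_j satisfies s c >= 0 as long as all of A still
   plays s: the neighbours in A contribute |N_i ∩ A|, the others at least -|N_i \ A|, and
   weak robustness says exactly that (1 - beta)(|N_i ∩ A| - |N_i \ A|) >= -beta |N_i|.
   Multiplying the update by s shows that s theta_i stays in [0, 1], hence the action
   of i never leaves s. *)
From mathcomp Require Import all_boot all_order all_algebra.
From mathcomp Require Import ring lra.
Set Implicit Arguments. Unset Strict Implicit. Unset Printing Implicit Defensive.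
Import Order.TTheory GRing.Theory Num.Theory.
Local Open Scope ring_scope.

Definition opinion_update (R : pzRingType) (t c : R) : R := t + (1 - t ^+ 2) * (c - t).

Lemma opinion_update_norm_le1 (R : realDomainType) (t c : R) :
  `|t| <= 1 -> `|c| <= 1 -> `|opinion_update t c| <= 1.
Proof.
rewrite /opinion_update !ler_norml => /andP[t_ge t_le] /andP[c_ge c_le].
have a1 : 0 <= (1 - t) * (t * t) by apply: mulr_ge0; nra.
have a2 : 0 <= (1 - t) * ((1 + t) * (1 - c)) by apply: mulr_ge0; [lra | apply: mulr_ge0; lra].
have a3 : 0 <= (1 + t) * (t * t) by apply: mulr_ge0; nra.
have a4 : 0 <= (1 + t) * ((1 - t) * (1 + c)) by apply: mulr_ge0; [lra | apply: mulr_ge0; lra].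
by apply/andP; split; nra.
Qed.

Lemma opinion_update_ge0 (R : realDomainType) (t c : R) :
  0 <= t <= 1 -> 0 <= c -> 0 <= opinion_update t c.
Proof.
move=> /andP[t_ge0 t_le1] c_ge0; rewrite /opinion_update.
have : 0 <= 1 - t ^+ 2 by nra.
nra.
Qed.

Lemma mul_sign_opinion_update (R : comPzRingType) (s t c : R) :
  s ^+ 2 = 1 -> s * opinion_update t c = opinion_update (s * t) (s * c).
Proof. by move=> s2; rewrite /opinion_update exprMn s2 mul1r; ring. Qed.

Lemma sum_ge_card_setI_sub_card_setD (R : realDomainType) (V : finType)
    (A B : {set V}) (f : V -> R) :
  (forall l, l \in B :&: A -> f l = 1) -> (forall l, -1 <= f l) ->
  #|B :&: A|%:R - #|B :\: A|%:R <= \sum_(l in B) f l.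
Proof.
move=> f_A f_ge; rewrite (big_setID A) /= -sumr_const -mulNrn -sumr_const.
by apply: lerD; apply: ler_sum => l // /f_A ->.
Qed.

Lemma act_step_sign (R : realFieldType) (s th : R) :
  s = 1 \/ s = -1 -> 0 <= s * th -> act_step th s = s.
Proof.
rewrite /act_step; case=> -> ; rewrite ?mul1r ?mulN1r ?oppr_ge0 => th_s.
  by rewrite (ltNge th 0) th_s; case: ifP.
by rewrite (ltNge 0 th) th_s /=; case: ifP.
Qed.

Section OpinionDynamics.
Variables (R : realFieldType) (V : finType) (e : rel V) (beta : R) (qp : nat -> R).
Variable theta : nat -> V -> R.

Lemma action_pm1 j k : action theta j k = 1 \/ action theta j k = -1.
Proof.
elim: k => [|k IH] /=; first by case: ifP; auto.
by rewrite /act_step; case: ifP => _; last case: ifP => _; auto.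
Qed.

Lemma norm_action j k : `|action theta j k| = 1.
Proof. by case: (action_pm1 j k) => ->; rewrite ?normrN normr1. Qed.

Lemma action0_sign j : 0 <= action theta j 0 * theta 0%N j.
Proof.
rewrite /=; case: ifP => [th_gt0 | /negbT]; first by rewrite mul1r ltW.
by rewrite -leNgt mulN1r oppr_ge0.
Qed.

Definition mean_action k i : R :=
  (#|nbrs e i|%:R)^-1 * \sum_(j in nbrs e i) action theta j k.

Definition drive k i : R := beta * qp k + (1 - beta) * mean_action k i.

Hypothesis nbrs_neq0 : forall i, nbrs e i != set0.
Hypotheses (beta_ge0 : 0 <= beta) (beta_lt1 : beta < 1).
Hypothesis dynamics : opinion_dynamics e beta qp theta.

Lemma card_nbrs_gt0 i : 0 < (#|nbrs e i|%:R : R).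
Proof. by rewrite ltr0n lt0n cards_eq0. Qed.

Lemma theta_succ k i : theta k.+1 i = opinion_update (theta k i) (drive k i).
Proof.
rewrite dynamics /opinion_update /drive /mean_action sumrB sumr_const -mulr_natr.
have := card_nbrs_gt0 i; set n := (#|nbrs e i|%:R : R) => n_gt0.
by congr (_ + _ * _); field; lra.
Qed.

Lemma norm_mean_action_le1 k i : `|mean_action k i| <= 1.
Proof.
have n_gt0 := card_nbrs_gt0 i.
rewrite /mean_action normrM normfV (gtr0_norm n_gt0) ler_pdivrMl // mulr1.
apply: le_trans (ler_norm_sum _ _ _) _; rewrite -sumr_const.
by apply: ler_sum => j _; rewrite norm_action.
Qed.

Hypothesis qp_pm1 : forall k, qp k = 1 \/ qp k = -1.

Lemma norm_drive_le1 k i : `|drive k i| <= 1.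
Proof.
have b0 := beta_ge0; have b1 := beta_lt1.
have := norm_mean_action_le1 k i; rewrite /drive !ler_norml => /andP[m_ge m_le].
have m_lo : 0 <= (1 - beta) * (1 + mean_action k i) by rewrite mulr_ge0 //; lra.
have m_hi : 0 <= (1 - beta) * (1 - mean_action k i) by rewrite mulr_ge0 //; lra.
by case: (qp_pm1 k) => ->; apply/andP; split; nra.
Qed.

Lemma norm_theta_le1 :
  (forall j, `|theta 0%N j| <= 1) -> forall k j, `|theta k j| <= 1.
Proof.
move=> theta0 k j; elim: k j => // k IH j.
by rewrite theta_succ; apply: opinion_update_norm_le1; [exact: IH | exact: norm_drive_le1].
Qed.

Variables (A : {set V}) (s : R).
Hypothesis s_pm1 : s = 1 \/ s = -1.
Hypothesis qp_cluster : forall k, qp k = s.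
Hypothesis robust : forall i, i \in A ->
  (#|nbrs e i :&: A|%:R : R) >= #|nbrs e i :\: A|%:R - beta / (1 - beta) * #|nbrs e i|%:R.

Lemma sign_sq : s ^+ 2 = 1.
Proof. by case: s_pm1 => ->; rewrite ?sqrrN expr1n. Qed.

Lemma drive_sign k i : i \in A -> (forall j, j \in A -> action theta j k = s) ->
  0 <= s * drive k i.
Proof.
move=> iA act_A; have b0 := beta_ge0; have b1 := beta_lt1.
have -> : s * drive k i = beta * s ^+ 2 +
    (#|nbrs e i|%:R)^-1 * ((1 - beta) * (s * \sum_(j in nbrs e i) action theta j k)).
  by rewrite /drive /mean_action qp_cluster; ring.
have := robust iA; have := card_nbrs_gt0 i; rewrite sign_sq mulr1.
set n := (#|nbrs e i|%:R : R); set a := (#|nbrs e i :&: A|%:R : R).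
set b := (#|nbrs e i :\: A|%:R : R); set x := s * \sum_(j in nbrs e i) _.
move=> n_gt0 robust_i.
have x_ge : a - b <= x.
  rewrite /x mulr_sumr; apply: sum_ge_card_setI_sub_card_setD => j.
    by rewrite in_setI => /andP[_ /act_A ->]; rewrite -expr2 sign_sq.
  by case: s_pm1 => ->; case: (action_pm1 j k) => ->; lra.
have robust_n : - (beta * n) <= (1 - beta) * (a - b).
  have -> : - (beta * n) = (1 - beta) * (- (beta / (1 - beta) * n)) by field; lra.
  by apply: ler_wpM2l; lra.
have x_robust : (1 - beta) * (a - b) <= (1 - beta) * x by apply: ler_wpM2l; lra.
have : - beta <= n^-1 * ((1 - beta) * x) by rewrite ler_pdivlMl //; lra.
lra.
Qed.

Lemma cluster_invariant :
  (forall j, `|theta 0%N j| <= 1) -> (forall j, j \in A -> action theta j 0 = s) ->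
  forall k j, j \in A -> 0 <= s * theta k j /\ action theta j k = s.
Proof.
move=> theta0 act0 k; elim: k => [|k IH] j jA.
  by rewrite -(act0 j jA) action0_sign.
have theta_s : 0 <= s * theta k.+1 j.
  rewrite theta_succ mul_sign_opinion_update ?sign_sq //.
  apply: opinion_update_ge0; last by apply: drive_sign => // l /IH[].
  have := norm_theta_le1 theta0 k j; rewrite (IH j jA).1 /= ler_norml.
  by case: s_pm1 => ->; lra.
by split=> //=; rewrite (IH j jA).2 act_step_sign.
Qed.

End OpinionDynamics.

Theorem mainTheorem5 (R : realFieldType) (V : finType) (e : rel V)
    (beta : R) (qp : nat -> R) (theta : nat -> V -> R) (A : {set V}) :
  (forall i : V, nbrs e i != set0) ->
  0 <= beta -> beta < 1 ->
  (forall k, qp k = 1 \/ qp k = -1) ->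
  (forall j : V, -1 < theta 0%N j < 1 /\ theta 0%N j != 0) ->
  opinion_dynamics e beta qp theta ->
  weakly_robust_polarized_cluster e beta theta A ->
  (forall (k : nat) (i : V), i \in A -> qp k = action theta i 0) ->
  forall (i : V) (k : nat), i \in A -> action theta i k = action theta i 0.
Proof.
move=> nbrs_neq0 beta_ge0 beta_lt1 qp_pm1 theta0 dynamics [same_act0 robust] qp_A i k iA.
have theta0_le1 j : `|theta 0%N j| <= 1.
  by case: (theta0 j) => /andP[lt lt'] _; rewrite ler_norml; apply/andP; split; lra.
have act0 j : j \in A -> action theta j 0 = action theta i 0 by move/same_act0; apply.
have qp_s l : qp l = action theta i 0 := qp_A l i iA.
by have [] := cluster_invariant nbrs_neq0 beta_ge0 beta_lt1 dynamics qp_pm1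
  (action_pm1 theta i 0) qp_s robust theta0_le1 act0 k iA.
Qed.
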